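(* For the RHA process and all $n\ge0$, $j\ge1$, $$H(X^n_j\mid\mathcal G_{\le n})=\log k_n\quad\text{and}\quad I(X^n_j;X^n_{j+1}\mid\mathcal G_{\le n})=0.$$
   Context: Random hierarchical association (RHA) process. Fix positive integers $(k_n)_{n\ge0}$ (perplexities) with $k_{n-1}\le k_n\le k_{n-1}^2$ for all $n\ge1$. On a probability space $(\Omega,\mathcal J,P)$ let, for each $n\ge1$, $(L_{nj},R_{nj})_{j=1}^{k_n}$ be the lexicographically sorted enumeration of a uniformly random $k_n$-element subset of $\{1,\dots,k_{n-1}\}^2$ (each of the $\binom{k_{n-1}^2}{k_n}$ subsets equally likely), independently over $n$. Let $(C_n)_{n\ge0}$ be independent, independent of all $(L_{nj},R_{nj})$, with $C_n$ uniform on $\{1,\dots,k_n\}$. Define strings $Y^0_j=j$ (length 1) for $1\le j\le k_0$ and $Y^n_j=Y^{n-1}_{L_{nj}}Y^{n-1}_{R_{nj}}$ (concatenation). The RHA process is $\mathcal X=Y^0_{C_0}Y^1_{C_1}Y^2_{C_2}\cdots=X_1X_2X_3\cdots$, $X_{k:l}=X_k\cdots X_l$; for $n\ge0$, $j\ge1$, $X^n_j=X_{j2^n:(j+1)2^n-1}$. $\mathcal G_{\le n}=(L_{lj},R_{lj})_{1\le l\le n,\,1\le j\le k_l}$ ($\mathcal G_{\le0}$ trivial). Logarithms are natural; $H(X|Y)=\mathbb E_P[-\log P(X|Y)]$ and $I(X;Y|Z)=H(X|Z)-H(X|Y,Z)$. *)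

From Stdlib Require Import Reals.
From HB Require Import structures.
From mathcomp Require Import all_boot.
Set Implicit Arguments.
Unset Strict Implicit.
Unset Printing Implicit Defensive.

(* The probability space is the uniform distribution on a finite set Om. *)
(* H(X|Z) = E[-log P(X|Z)],  P(X=x|Z=z) = #{X=x,Z=z} / #{Z=z}.            *)
Definition condEnt {T : finType} {A B : eqType} (Om : {set T})
  (X : T -> A) (Z : T -> B) : R :=
  \big[Rplus/R0]_(w in Om)
    (Rdiv (Ropp (ln (Rdiv (INR #|[set w' in Om | (X w' == X w) && (Z w' == Z w)]|)
                          (INR #|[set w' in Om | Z w' == Z w]|))))
          (INR #|Om|)).

Definition mutInf {T : finType} {A B C : eqType} (Om : {set T})
  (X : T -> A) (Y : T -> B) (Z : T -> C) : R :=
  Rminus (condEnt Om X Z) (condEnt Om X (fun w => (Y w, Z w))).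

(* Symbols/indices are 0-based: {1..k} is represented by {0..k-1}. *)
Definition bnd (k : nat -> nat) (N : nat) : nat := (\max_(l < N.+1) k l).+1.

(* outcome: for each level l <= N a set S_l of pairs (level 0 unused),
   and a choice C_l. *)
Definition outcome (k : nat -> nat) (N : nat) : finType :=
  ({ffun 'I_N.+1 -> {set 'I_(bnd k N) * 'I_(bnd k N)}}
   * {ffun 'I_N.+1 -> 'I_(bnd k N)})%type.

Definition valid (k : nat -> nat) (N : nat) (w : outcome k N) : bool :=
  [forall l : 'I_N.+1,
     (w.2 l < k l) &&
     (if (l : nat) == 0 then w.1 l == set0
      else (w.1 l \subset [set p : 'I_(bnd k N) * 'I_(bnd k N) | (p.1 < k l.-1) && (p.2 < k l.-1)])
           && (#|w.1 l| == k l))].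

(* Uniform measure on Omega = independent uniform k_l-subsets of
   [k_{l-1}]^2 (1<=l<=N) and independent uniform C_l in [k_l] (0<=l<=N). *)
Definition Omega (k : nat -> nat) (N : nat) : {set outcome k N} :=
  [set w | valid w].

Definition lvl (k : nat -> nat) (N : nat) (w : outcome k N) (l : nat)
  : {set 'I_(bnd k N) * 'I_(bnd k N)} :=
  if l <= N then w.1 (inord l) else set0.

Definition cho (k : nat -> nat) (N : nat) (w : outcome k N) (l : nat) : nat :=
  if l <= N then val (w.2 (inord l)) else 0.

Definition lexle (p q : nat * nat) : bool :=
  (p.1 < q.1) || ((p.1 == q.1) && (p.2 <= q.2)).

(* lexicographically sorted enumeration (L_{l,j}, R_{l,j})_j of S_l *)
Definition pairs (k : nat -> nat) (N : nat) (w : outcome k N) (l : nat)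
  : seq (nat * nat) :=
  sort lexle [seq ((val p.1 : nat), (val p.2 : nat)) | p <- enum (lvl w l)].

Fixpoint Ystr (k : nat -> nat) (N : nat) (w : outcome k N) (l j : nat)
  : seq nat :=
  match l with
  | 0 => [:: j]
  | l'.+1 => let p := nth (0, 0) (pairs w l'.+1) j in
             Ystr w l' p.1 ++ Ystr w l' p.2
  end.

(* X_1 X_2 ... X_{2^(N+1)-1} = Y^0_{C_0} Y^1_{C_1} ... Y^N_{C_N} *)
Definition Xseq (k : nat -> nat) (N : nat) (w : outcome k N) : seq nat :=
  flatten [seq Ystr w m (cho w m) | m <- iota 0 N.+1].

(* X^n_j = X_{j 2^n : (j+1) 2^n - 1} (1-based positions) *)
Definition Xblock (k : nat -> nat) (N n j : nat) (w : outcome k N) : seq nat :=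
  take (2 ^ n) (drop (j * 2 ^ n).-1 (Xseq w)).

Definition Gle (k : nat -> nat) (N n : nat) (w : outcome k N)
  : seq {set 'I_(bnd k N) * 'I_(bnd k N)} :=
  [seq lvl w l | l <- iota 1 n].

From Stdlib Require Import Reals Lra.
From HB Require Import structures.
From mathcomp Require Import all_boot zify.

Set Implicit Arguments.
Unset Strict Implicit.
Unset Printing Implicit Defensive.

(* Given G_{<= n}, the map i |-> Y^n_i is injective on [0, k_n), and the block
   X^n_t equals Y^n_i for an index i read off, along the binary expansion of t,
   from the pairs of the levels above n and one choice C_l.  For even t, i is the
   left component of a pair of level n + 1; for odd t it is a right component or
   C_n.  Relabelling the level-n indices by a permutation sg in left components
   and rh in right components and C_n, then re-sorting every higher level and
   propagating the induced relabelling upwards, is a bijection of the sample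
   space fixing G_{<= n}.  As j and j + 1 have different parities, it moves the
   index pair (a, c) of the blocks j, j + 1 to any other pair, so given G_{<= n}
   that pair is uniform on [0, k_n)^2: X^n_j is uniform on k_n values and
   independent of X^n_{j+1}. *)

Lemma big_Rplus_const (T : finType) (A : {set T}) (c : R) :
  \big[Rplus/R0]_(w in A) c = Rmult (INR #|A|) c.
Proof.
rewrite big_const; elim: #|A| => [|m IH]; first by rewrite /= Rmult_0_l.
by rewrite iterS IH S_INR; ring.
Qed.

Lemma condEnt_uniform (T : finType) (A B : eqType) (Om : {set T})
    (X : T -> A) (Z : T -> B) K :
  0 < #|Om| -> 0 < K ->
  {in Om, forall w, #|[set w' in Om | Z w' == Z w]|
                    = K * #|[set w' in Om | (X w' == X w) && (Z w' == Z w)]|} ->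
  condEnt Om X Z = ln (INR K).
Proof.
move=> hOm hK hcount.
have hOmR : Rlt 0 (INR #|Om|) by apply: lt_0_INR; apply/ltP.
have hKR : Rlt 0 (INR K) by apply: lt_0_INR; apply/ltP.
rewrite /condEnt (eq_bigr (fun _ => Rdiv (ln (INR K)) (INR #|Om|))).
  by rewrite big_Rplus_const; field; lra.
move=> w hw; rewrite hcount // mult_INR.
set c := #|_|; have hcR : Rlt 0 (INR c).
  by apply: lt_0_INR; apply/ltP/card_gt0P; exists w; rewrite inE hw !eqxx.
have -> : Rdiv (INR c) (Rmult (INR K) (INR c)) = Rinv (INR K) by field; lra.
by rewrite ln_Rinv // Ropp_involutive.
Qed.

Lemma in_set_in (T : finType) (A : {set T}) (P : pred T) x :
  (x \in [set y in A | P y]) = (x \in A) && P x.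
Proof. by rewrite in_set. Qed.

Lemma card_fibers (T : finType) (A : {set T}) (f : T -> nat) K F :
  {in A, forall w, f w < K} ->
  (forall a, a < K -> #|[set w in A | f w == a]| = F) ->
  #|A| = K * F.
Proof.
elim: K A => [|K IH] A hA hF.
  apply/eqP; rewrite cards_eq0; apply/eqP/setP => w; rewrite inE.
  by apply/negbTE/negP => /hA.
rewrite -(cardsID [set w | f w == K] A) mulSn.
have -> : A :&: [set w | f w == K] = [set w in A | f w == K].
  by apply/setP => w; rewrite !inE.
rewrite hF //; congr (_ + _); apply: IH => [w|a ha].
  by rewrite !inE => /andP [hK /hA]; lia.
rewrite -(hF a (ltnW ha)); apply: eq_card => w; rewrite !inE.
by case: (f w =P a) => [->|]; rewrite ?andbF // (ltn_eqF ha).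
Qed.

Lemma sumn_exp2_iota m : sumn [seq 2 ^ i | i <- iota 0 m] = (2 ^ m).-1.
Proof.
elim: m => [|m IH] //.
have -> : iota 0 m.+1 = iota 0 m ++ [:: m] by rewrite -addn1 iotaD.
rewrite map_cat sumn_cat IH /= addn0 expnS.
have := expn_gt0 2 m; lia.
Qed.

Lemma block_level t l N : 0 < t -> t * 2 ^ l < 2 ^ N.+1 -> l <= N.
Proof.
move=> ht htN; rewrite -ltnS -(ltn_exp2l _ _ (ltnSn 1)).
by apply: leq_ltn_trans htN; rewrite leq_pmull.
Qed.

Lemma block_fuel t l N : 0 < t -> t * 2 ^ l < 2 ^ N.+1 -> t < 2 ^ N.+1.
Proof. by move=> ht htN; apply: leq_ltn_trans htN; rewrite leq_pmulr ?expn_gt0. Qed.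

Lemma block_half t d l N : 1 < t -> t < 2 ^ d.+1 -> t * 2 ^ l < 2 ^ N.+1 ->
  [/\ 0 < t./2, t./2 < 2 ^ d & t./2 * 2 ^ l.+1 < 2 ^ N.+1].
Proof.
move=> ht1 htd htN; have := odd_double_half t.
set c := t./2; clearbody c; rewrite -muln2 !expnS in htd htN *.
by case: (odd t) => /= ht; split; nia.
Qed.

Section Strings.
Variables (k : nat -> nat) (N : nat).
Local Notation out := (outcome k N).

Lemma size_Ystr (w : out) l i : size (Ystr w l i) = 2 ^ l.
Proof. by elim: l i => [|l IH] i //=; rewrite size_cat !IH expnS mul2n addnn. Qed.

Lemma Xblock_1 (w : out) m : m <= N -> Xblock m 1 w = Ystr w m (cho w m).
Proof.
move=> hm; rewrite /Xblock /Xseq mul1n.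
have -> : N.+1 = m + (N - m).+1 by lia.
rewrite iotaD map_cat flatten_cat /= drop_size_cat ?take_size_cat ?size_Ystr //.
rewrite size_flatten /shape -map_comp.
by under eq_map do rewrite /= size_Ystr; rewrite sumn_exp2_iota.
Qed.

Fixpoint block_index (w : out) (l t d : nat) : nat :=
  match d with
  | 0 => cho w l
  | d'.+1 => if t <= 1 then cho w l else
      let p := nth (0, 0) (pairs w l.+1) (block_index w l.+1 t./2 d') in
      if odd t then p.2 else p.1
  end.

Lemma Xblock_index (w : out) d l t : 0 < t -> t < 2 ^ d -> t * 2 ^ l < 2 ^ N.+1 ->
  Xblock l t w = Ystr w l (block_index w l t d).
Proof.
elim: d l t => [|d IH] l t ht0 htd htN /=; first by rewrite expn0 in htd; lia.
case: (leqP t 1) => ht1.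
  have -> : t = 1 by lia.
  by rewrite (Xblock_1 _ (block_level ht0 htN)).
have [hc0 hcd hcN] := block_half ht1 htd htN.
have := IH _ _ hc0 hcd hcN; rewrite /= /Xblock.
set p := nth _ _ _ => hX; have hs := size_Ystr w l p.1.
have := odd_double_half t; set c := t./2; rewrite -/c in hX; clearbody c.
case: (odd t) => ht /=.
- have -> : (t * 2 ^ l).-1 = 2 ^ l + (c * 2 ^ l.+1).-1.
    rewrite -ht expnS; have := expn_gt0 2 l; nia.
  by rewrite -drop_drop take_drop addnn -mul2n -expnS hX drop_size_cat.
- have -> : t * 2 ^ l = c * 2 ^ l.+1 by rewrite -ht expnS; nia.
  rewrite -(take_takel _ (_ : 2 ^ l <= 2 ^ l.+1)); last by rewrite leq_exp2l.
  by rewrite hX take_size_cat.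
Qed.

End Strings.

Definition box (b K : nat) : {set 'I_b * 'I_b} := [set p : 'I_b * 'I_b | (p.1 < K) && (p.2 < K)].

Lemma card_ord_lt b K : K <= b -> #|[set x : 'I_b | x < K]| = K.
Proof.
move=> hK; have inj : injective (widen_ord hK) by move=> x y /(congr1 val) /= /val_inj.
rewrite -[RHS]card_ord -cardsT -(card_imset _ inj).
apply: eq_card => x; rewrite inE; apply/idP/imsetP => [hx|[y _ ->]]; last by rewrite /= ltn_ord.
by exists (Ordinal hx); rewrite ?inE //; apply: val_inj.
Qed.

Lemma card_box b K : K <= b -> #|box b K| = K * K.
Proof.
move=> hK; have -> : box b K = setX [set x : 'I_b | x < K] [set x : 'I_b | x < K].
  by apply/setP => p; rewrite !inE.
by rewrite cardsX card_ord_lt.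
Qed.

Definition pair_val (b : nat) (p : 'I_b * 'I_b) : nat * nat := (val p.1, val p.2).

Lemma pair_val_inj b : injective (@pair_val b).
Proof. by move=> [x1 x2] [y1 y2] [/val_inj -> /val_inj ->]. Qed.

Lemma lexle_total : total lexle.
Proof. by move=> [a b] [c d]; rewrite /lexle /=; apply/orP; lia. Qed.

Lemma lexle_trans : transitive lexle.
Proof. by move=> [a b] [c d] [e f]; rewrite /lexle /= => /orP h1 /orP h2; apply/orP; lia. Qed.

Lemma lexle_anti : antisymmetric lexle.
Proof.
move=> [a b] [c d]; rewrite /lexle /= => /andP [/orP h1 /orP h2].
by have [-> ->] : a = c /\ b = d by lia.
Qed.

Section SampleSpace.
Variables (k : nat -> nat) (N : nat).
Local Notation out := (outcome k N).
Local Notation b := (bnd k N).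
Local Notation Om := (Omega k N).

Lemma k_lt_bnd l : l <= N -> k l < b.
Proof.
move=> hl; rewrite /bnd ltnS.
exact: (@leq_bigmax _ (fun i : 'I_N.+1 => k i) (Ordinal (hl : l < N.+1))).
Qed.

Lemma lvl_ord (w : out) (l : 'I_N.+1) : lvl w l = w.1 l.
Proof. by rewrite /lvl -ltnS ltn_ord inord_val. Qed.

Lemma cho_ord (w : out) (l : 'I_N.+1) : cho w l = w.2 l.
Proof. by rewrite /cho -ltnS ltn_ord inord_val. Qed.

Lemma outcome_ext (w w' : out) : (forall l, lvl w l = lvl w' l) ->
  (forall l, l <= N -> cho w l = cho w' l) -> w = w'.
Proof.
case: w w' => [w1 w2] [w1' w2'] hl hc; congr (_, _); apply/ffunP => l.
  by have := hl l; rewrite !lvl_ord.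
by apply: val_inj; have := hc l; rewrite -ltnS ltn_ord !cho_ord; apply.
Qed.

Lemma in_Omega (w : out) : (w \in Om) =
  [forall l : 'I_N.+1, (cho w l < k l) &&
     (if l == 0 :> nat then lvl w l == set0
      else (lvl w l \subset box b (k l.-1)) && (#|lvl w l| == k l))].
Proof. by rewrite inE; apply: eq_forallb => l; rewrite lvl_ord cho_ord. Qed.

Lemma Omega_cho (w : out) l : w \in Om -> l <= N -> cho w l < k l.
Proof.
by rewrite in_Omega => /forallP /(_ (Ordinal (_ : l < N.+1))) h hl; case/andP: (h hl).
Qed.

Lemma Omega_lvl (w : out) l : w \in Om -> 0 < l <= N ->
  lvl w l \subset box b (k l.-1) /\ #|lvl w l| = k l.
Proof.
move=> /[swap] /andP [hl0 hl]; rewrite in_Omega => /forallP /(_ (Ordinal (hl : l < N.+1))).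
by rewrite /= (_ : (l == 0) = false) => [/and3P [_ ? /eqP]|]; lia.
Qed.

Lemma lvl_bound (w : out) l p : w \in Om -> 0 < l <= N -> p \in lvl w l ->
  p.1 < k l.-1 /\ p.2 < k l.-1.
Proof.
move=> hw hl hp; have [/subsetP hsub _] := Omega_lvl hw hl.
by have := hsub p hp; rewrite inE => /andP [].
Qed.

Lemma pairsE (w : out) l : pairs w l = sort lexle (map (@pair_val b) (enum (lvl w l))).
Proof. by []. Qed.

Lemma mem_pairs (w : out) l x : (x \in pairs w l) = (x \in map (@pair_val b) (enum (lvl w l))).
Proof. by rewrite pairsE mem_sort. Qed.

Lemma pairs_uniq (w : out) l : uniq (pairs w l).
Proof. by rewrite pairsE sort_uniq map_inj_uniq ?enum_uniq //; apply: pair_val_inj. Qed.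

Lemma size_pairs (w : out) l : w \in Om -> 0 < l <= N -> size (pairs w l) = k l.
Proof.
move=> hw hl; have [_ <-] := Omega_lvl hw hl.
by rewrite pairsE size_sort size_map -cardE.
Qed.

Lemma pairs_bound (w : out) l x : w \in Om -> 0 < l <= N -> x \in pairs w l ->
  x.1 < k l.-1 /\ x.2 < k l.-1.
Proof.
move=> hw hl; rewrite mem_pairs => /mapP [p]; rewrite mem_enum => hp ->.
exact: lvl_bound hw hl hp.
Qed.

Lemma nth_pairs_bound (w : out) l i : w \in Om -> 0 < l <= N -> i < k l ->
  (nth (0, 0) (pairs w l) i).1 < k l.-1 /\ (nth (0, 0) (pairs w l) i).2 < k l.-1.
Proof.
by move=> hw hl hi; apply: (pairs_bound hw hl); rewrite mem_nth // (size_pairs hw hl).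
Qed.

Lemma block_index_lt (w : out) d l t : w \in Om -> 0 < t -> t < 2 ^ d ->
  t * 2 ^ l < 2 ^ N.+1 -> block_index w l t d < k l.
Proof.
move=> hw; elim: d l t => [|d IH] l t ht0 htd htN /=; first by rewrite expn0 in htd; lia.
have hlN := block_level ht0 htN.
case: (leqP t 1) => ht1; first exact: Omega_cho.
have [hc0 hcd hcN] := block_half ht1 htd htN.
have hl1 : 0 < l.+1 <= N by rewrite (block_level hc0 hcN).
by have [] := nth_pairs_bound hw hl1 (IH _ _ hc0 hcd hcN); case: (odd t).
Qed.

Lemma Gle_lvl (w w' : out) n l : Gle n w = Gle n w' -> 0 < l <= n -> lvl w l = lvl w' l.
Proof.
move=> h /andP [h0 hl]; have := congr1 (fun s => nth set0 s l.-1) h.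
rewrite !(nth_map 0) ?size_iota ?nth_iota; try lia.
by rewrite add1n prednK.
Qed.

Lemma Ystr_Gle (w w' : out) n : Gle n w = Gle n w' ->
  forall l i, l <= n -> Ystr w l i = Ystr w' l i.
Proof.
move=> h; elim=> [|l IH] i hl //=.
by rewrite !pairsE (Gle_lvl h) ?IH //; lia.
Qed.

Lemma Ystr_inj (w : out) l i i' : w \in Om -> l <= N -> i < k l -> i' < k l ->
  Ystr w l i = Ystr w l i' -> i = i'.
Proof.
move=> hw; elim: l i i' => [|l IH] i i' hl hi hi' /=; first by case.
move/eqP; rewrite eqseq_cat ?size_Ystr // => /andP [/eqP e1 /eqP e2].
have hl' : 0 < l.+1 <= N by rewrite hl.
have [a1 a2] := nth_pairs_bound hw hl' hi.
have [b1 b2] := nth_pairs_bound hw hl' hi'.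
rewrite -(size_pairs hw hl') in hi hi'.
apply/eqP; rewrite -(nth_uniq (0, 0) hi hi' (pairs_uniq w l.+1)); apply/eqP.
by rewrite [nth _ _ i]surjective_pairing [nth _ _ i']surjective_pairing
  (IH _ _ (ltnW hl) a1 b1 e1) (IH _ _ (ltnW hl) a2 b2 e2).
Qed.

Lemma eq_Xblock_index (w w' : out) n t : w \in Om -> w' \in Om -> Gle n w' = Gle n w ->
  0 < t -> t * 2 ^ n < 2 ^ N.+1 ->
  (Xblock n t w' == Xblock n t w) = (block_index w' n t N.+1 == block_index w n t N.+1).
Proof.
move=> hw hw' hz ht htN; have htd := block_fuel ht htN.
rewrite !(Xblock_index _ ht htd htN) (Ystr_Gle hz) //.
apply/eqP/eqP => [|-> //]; apply: (Ystr_inj hw (block_level ht htN));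
  exact: block_index_lt.
Qed.

End SampleSpace.

Lemma Omega_inhabited (k : nat -> nat) N :
  (forall n, 0 < k n) -> (forall n, k n.+1 <= k n ^ 2) -> exists w, w \in Omega k N.
Proof.
move=> hpos hsq; set b := bnd k N.
pose S (l : 'I_N.+1) := [set x in take (k l) (enum (box b (k l.-1)))].
exists ([ffun l : 'I_N.+1 => if l == 0 :> nat then set0 else S l],
        [ffun=> Ordinal (ltn0Sn _)]).
rewrite inE; apply/forallP => l; rewrite !ffunE hpos /=.
case: (boolP (l == 0 :> nat)) => hl0 //.
have hkl : k l <= size (enum (box b (k l.-1))).
  rewrite -cardE card_box ?mulnn; last first.
    by apply/ltnW/k_lt_bnd; rewrite -ltnS (leq_ltn_trans (leq_pred l)).
  by rewrite -[in k l](prednK (_ : 0 < l)) ?lt0n //; apply: hsq.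
apply/andP; split.
  by apply/subsetP => p; rewrite inE => /mem_take; rewrite mem_enum inE.
by rewrite cardsE (card_uniqP _) ?size_takel ?take_uniq ?enum_uniq.
Qed.

Definition perm_below (K : nat) (f : nat -> nat) : Prop :=
  (forall x, x < K -> f x < K) /\ (forall x y, x < K -> y < K -> f x = f y -> x = y).

Definition map_pair (h : (nat -> nat) * (nat -> nat)) (x : nat * nat) : nat * nat :=
  (h.1 x.1, h.2 x.2).

Lemma map_pair_inj K h x y : perm_below K h.1 -> perm_below K h.2 ->
  x.1 < K -> x.2 < K -> y.1 < K -> y.2 < K -> map_pair h x = map_pair h y -> x = y.
Proof.
case: x y => [x1 x2] [y1 y2] [_ i1] [_ i2] /= hx1 hx2 hy1 hy2 [e1 e2].
by rewrite (i1 _ _ hx1 hy1 e1) (i2 _ _ hx2 hy2 e2).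
Qed.

Section Relabel.
Variables (k : nat -> nat) (N n : nat) (sg rh : nat -> nat).
Hypotheses (sg_perm : perm_below (k n) sg) (rh_perm : perm_below (k n) rh).
Local Notation out := (outcome k N).
Local Notation b := (bnd k N).
Local Notation Om := (Omega k N).

Definition lift_ord (f : nat -> nat) (x : 'I_b) : 'I_b := insubd x (f x).

Definition lift_pair h (p : 'I_b * 'I_b) : 'I_b * 'I_b :=
  (lift_ord h.1 p.1, lift_ord h.2 p.2).

(* Where the relabelled [i]-th pair of level [l] lands once level [l] is re-sorted. *)
Definition resort_index (w : out) l h (i : nat) : nat :=
  index (map_pair h (nth (0, 0) (pairs w l) i)) (sort lexle (map (map_pair h) (pairs w l))).

(* The relabellings of the left and right components of the pairs of level [l]
   (meaningful for [l > n]): [sg] and [rh] at level [n + 1], and above it the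
   relabelling of level [l - 1] induced by re-sorting. *)
Fixpoint relabel_pairs (w : out) l : (nat -> nat) * (nat -> nat) :=
  match l with
  | 0 => (sg, rh)
  | l'.+1 => if l' <= n then (sg, rh)
             else let t := resort_index w l' (relabel_pairs w l') in (t, t)
  end.

Definition relabel_cho (w : out) l : nat -> nat :=
  if l == n then rh else resort_index w l (relabel_pairs w l).

Definition relabel (w : out) : out :=
  ([ffun l : 'I_N.+1 => if n < l then [set lift_pair (relabel_pairs w l) p | p in w.1 l]
                        else w.1 l],
   [ffun l : 'I_N.+1 => if n <= l then lift_ord (relabel_cho w l) (w.2 l) else w.2 l]).

Lemma resort_index_perm (w : out) l h : w \in Om -> 0 < l <= N ->
  perm_below (k l.-1) h.1 -> perm_below (k l.-1) h.2 ->
  perm_below (k l) (resort_index w l h) /\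
  (forall i, i < k l -> nth (0, 0) (sort lexle (map (map_pair h) (pairs w l)))
                          (resort_index w l h i) = map_pair h (nth (0, 0) (pairs w l) i)).
Proof.
move=> hw hl h1 h2; have hs := size_pairs hw hl.
have hm i : i < k l ->
    map_pair h (nth (0, 0) (pairs w l) i) \in sort lexle (map (map_pair h) (pairs w l)).
  by move=> hi; rewrite mem_sort map_f // mem_nth // hs.
split; [split|] => [i hi|i i' hi hi'|i hi]; last by rewrite nth_index // hm.
- have -> : k l = size (sort lexle (map (map_pair h) (pairs w l))).
    by rewrite size_sort size_map hs.
  by rewrite /resort_index index_mem hm.
- rewrite /resort_index => e.
  have := nth_index (0, 0) (hm i hi); rewrite e nth_index ?hm // => e'.
  have [a1 a2] := nth_pairs_bound hw hl hi; have [b1 b2] := nth_pairs_bound hw hl hi'.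
  rewrite -hs in hi hi'; apply/eqP; rewrite -(nth_uniq (0, 0) hi hi' (pairs_uniq w l)).
  by apply/eqP/(map_pair_inj h1 h2 a1 a2 b1 b2).
Qed.

Lemma relabel_pairs_perm (w : out) l : w \in Om -> n < l <= N ->
  perm_below (k l.-1) (relabel_pairs w l).1 /\ perm_below (k l.-1) (relabel_pairs w l).2.
Proof.
move=> hw; elim: l => [|l IH] hl /=; first by lia.
case: ifP => hln; first by have -> : l = n by lia.
have hl0 : 0 < l <= N by lia.
have hl1 : n < l <= N by lia.
have [G1 G2] := IH hl1.
by have [G _] := resort_index_perm hw hl0 G1 G2.
Qed.

Lemma relabel_cho_perm (w : out) l : w \in Om -> n <= l <= N -> perm_below (k l) (relabel_cho w l).
Proof.
move=> hw hl; rewrite /relabel_cho; case: eqP => [->|hne] //.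
have hl0 : 0 < l <= N by lia.
have hl1 : n < l <= N by lia.
have [G1 G2] := relabel_pairs_perm hw hl1.
by have [] := resort_index_perm hw hl0 G1 G2.
Qed.

Lemma lift_ord_val (f : nat -> nat) (x : 'I_b) : f x < b -> val (lift_ord f x) = f x.
Proof. by move=> h; rewrite val_insubd h. Qed.

Lemma pair_val_lift h K (p : 'I_b * 'I_b) : K <= b -> perm_below K h.1 -> perm_below K h.2 ->
  p.1 < K -> p.2 < K -> pair_val (lift_pair h p) = map_pair h (pair_val p).
Proof.
move=> hK [g1 _] [g2 _] h1 h2; rewrite /pair_val /lift_pair /map_pair /=.
by rewrite !lift_ord_val // (leq_trans _ hK) // ?g1 ?g2.
Qed.

Lemma lift_pair_inj h K (p q : 'I_b * 'I_b) : K <= b -> perm_below K h.1 -> perm_below K h.2 ->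
  p.1 < K -> p.2 < K -> q.1 < K -> q.2 < K -> lift_pair h p = lift_pair h q -> p = q.
Proof.
move=> hK G1 G2 p1 p2 q1 q2 /(congr1 (@pair_val b)).
rewrite !(pair_val_lift hK G1 G2) //.
by move/(map_pair_inj (x := pair_val p) (y := pair_val q) G1 G2 p1 p2 q1 q2)/pair_val_inj.
Qed.

Lemma lvl_relabel_low (w : out) l : l <= n -> lvl (relabel w) l = lvl w l.
Proof.
by move=> hl; rewrite /lvl; case: ifP => // hlN; rewrite ffunE inordK // ltnNge hl.
Qed.

Lemma lvl_relabel_high (w : out) l : n < l <= N ->
  lvl (relabel w) l = [set lift_pair (relabel_pairs w l) p | p in lvl w l].
Proof. by move=> /andP [h1 h2]; rewrite /lvl h2 ffunE inordK // h1. Qed.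

Lemma cho_relabel_low (w : out) l : l < n -> cho (relabel w) l = cho w l.
Proof.
by move=> hl; rewrite /cho; case: ifP => // hlN; rewrite ffunE inordK // leqNgt hl.
Qed.

Lemma cho_relabel_high (w : out) l : w \in Om -> n <= l <= N ->
  cho (relabel w) l = relabel_cho w l (cho w l).
Proof.
move=> hw hl; have [g _] := relabel_cho_perm hw hl; case/andP: hl => h1 h2.
have hc := Omega_cho hw h2; rewrite /cho h2 in hc *.
by rewrite ffunE inordK // h1 lift_ord_val // (leq_trans (g _ hc) (ltnW (k_lt_bnd k h2))).
Qed.

Lemma Gle_relabel (w : out) : Gle n (relabel w) = Gle n w.
Proof.
by apply/eq_in_map => l; rewrite mem_iota => hl; apply: lvl_relabel_low; lia.
Qed.

Lemma lvl_relabel_Omega (w : out) l : w \in Om -> n < l <= N ->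
  lvl (relabel w) l \subset box b (k l.-1) /\ #|lvl (relabel w) l| = k l.
Proof.
move=> hw hl; have hl0 : 0 < l <= N by lia.
have [G1 G2] := relabel_pairs_perm hw hl.
have hK : k l.-1 <= b by apply/ltnW/k_lt_bnd; lia.
have [_ <-] := Omega_lvl hw hl0; rewrite lvl_relabel_high //; split.
  apply/subsetP => _ /imsetP [p hp ->]; have [p1 p2] := lvl_bound hw hl0 hp.
  have := pair_val_lift hK G1 G2 p1 p2; rewrite inE /pair_val /map_pair /= => -[-> ->].
  by case: G1 G2 => [g1 _] [g2 _]; rewrite g1 ?g2.
apply: card_in_imset => p q hp hq.
have [p1 p2] := lvl_bound hw hl0 hp; have [q1 q2] := lvl_bound hw hl0 hq.
exact: lift_pair_inj hK G1 G2 p1 p2 q1 q2.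
Qed.

Lemma relabel_in_Omega (w : out) : w \in Om -> relabel w \in Om.
Proof.
move=> hw; have := hw; rewrite !in_Omega => /forallP hv; apply/forallP => l.
have hlN : (l : nat) <= N by rewrite -ltnS.
have /andP [hc hlv] := hv l; apply/andP; split.
  case: (ltnP l n) => hln; first by rewrite cho_relabel_low.
  have hl : n <= l <= N by rewrite hln.
  by have [g _] := relabel_cho_perm hw hl; rewrite cho_relabel_high // g.
case: (leqP l n) => hln; first by rewrite lvl_relabel_low.
have hl : n < l <= N by rewrite hln.
have [-> ->] := lvl_relabel_Omega hw hl.
by rewrite (_ : (l == 0 :> nat) = false) ?eqxx //; lia.
Qed.

Lemma pairs_relabel (w : out) l : w \in Om -> n < l <= N ->
  pairs (relabel w) l = sort lexle (map (map_pair (relabel_pairs w l)) (pairs w l)).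
Proof.
move=> hw hl; have hl0 : 0 < l <= N by lia.
have [G1 G2] := relabel_pairs_perm hw hl.
have hK : k l.-1 <= b by apply/ltnW/k_lt_bnd; lia.
rewrite pairsE lvl_relabel_high //; apply/perm_sort_inP.
- by move=> x y _ _; apply: lexle_total.
- by move=> x y z _ _ _; apply: lexle_trans.
- by move=> x y _ _; apply: lexle_anti.
apply: uniq_perm.
- by rewrite map_inj_uniq ?enum_uniq //; apply: pair_val_inj.
- rewrite map_inj_in_uniq ?pairs_uniq // => x y hx hy.
  have [a1 a2] := pairs_bound hw hl0 hx; have [b1 b2] := pairs_bound hw hl0 hy.
  exact: map_pair_inj G1 G2 a1 a2 b1 b2.
move=> x; apply/mapP/mapP => [[q]|[y]].
  rewrite mem_enum => /imsetP [p hp ->] ->; have [p1 p2] := lvl_bound hw hl0 hp.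
  by exists (pair_val p); rewrite ?(pair_val_lift hK G1 G2) // mem_pairs map_f ?mem_enum.
rewrite mem_pairs => /mapP [p]; rewrite mem_enum => hp -> ->.
have [p1 p2] := lvl_bound hw hl0 hp.
by exists (lift_pair (relabel_pairs w l) p); rewrite ?(pair_val_lift hK G1 G2) ?mem_enum ?imset_f.
Qed.

Lemma block_index_relabel (w : out) d l t : w \in Om -> 0 < t -> t < 2 ^ d ->
  t * 2 ^ l < 2 ^ N.+1 -> n <= l ->
  block_index (relabel w) l t d
  = (if n < l then relabel_cho w l else if odd t then rh else sg) (block_index w l t d).
Proof.
move=> hw; elim: d l t => [|d IH] l t ht0 htd htN hnl /=; first by rewrite expn0 in htd; lia.
have hlN := block_level ht0 htN.
case: (leqP t 1) => ht1.
  rewrite cho_relabel_high ?hnl ?hlN //; case: ifP => // hnl'.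
  have -> : l = n by lia.
  have -> : t = 1 by lia.
  by rewrite /relabel_cho eqxx.
have [hc0 hcd hcN] := block_half ht1 htd htN.
have hl1 : n < l.+1 <= N by rewrite ltnS hnl (block_level hc0 hcN).
have [G1 G2] := relabel_pairs_perm hw hl1.
have hl10 : 0 < l.+1 <= N by case/andP: hl1.
have [_ hnth] := resort_index_perm hw hl10 G1 G2.
rewrite IH ?ltnS ?hnl ?(leqW hnl) // (pairs_relabel hw hl1).
rewrite /relabel_cho (_ : (l.+1 == n) = false); last by apply: gtn_eqF; lia.
rewrite hnth ?(block_index_lt hw hc0 hcd hcN) //= /map_pair /=.
by case: (leqP l n) => hln; rewrite ?gtn_eqF //; case: (odd t).
Qed.

Lemma relabel_pairs_ext (w w' : out) l : (forall l', l' < l -> pairs w l' = pairs w' l') ->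
  relabel_pairs w l = relabel_pairs w' l.
Proof.
elim: l => [|l IH] h //=; case: ifP => // _.
have h' l' : l' < l -> pairs w l' = pairs w' l' by move=> hl'; apply: h; lia.
by rewrite IH // /resort_index h.
Qed.

Lemma lvl_relabel_inj (w w' : out) : w \in Om -> w' \in Om ->
  relabel w = relabel w' -> forall l, lvl w l = lvl w' l.
Proof.
move=> hw hw' e; elim/ltn_ind => l IH.
case: (leqP l n) => hln; first by rewrite -(lvl_relabel_low w hln) e lvl_relabel_low.
case: (leqP l N) => hlN; last by rewrite /lvl leqNgt hlN.
have hl : n < l <= N by rewrite hln hlN.
have hl0 : 0 < l <= N by lia.
have hK : k l.-1 <= b by apply/ltnW/k_lt_bnd; lia.
have [G1 G2] := relabel_pairs_perm hw hl.
have hh : relabel_pairs w l = relabel_pairs w' l.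
  by apply: relabel_pairs_ext => l' hl'; rewrite !pairsE IH.
have E := congr1 (fun u : out => lvl u l) e; rewrite /= !lvl_relabel_high // -hh in E.
have lift_in u u' p : u \in Om -> u' \in Om -> p \in lvl u l ->
    [set lift_pair (relabel_pairs w l) p | p in lvl u l]
    = [set lift_pair (relabel_pairs w l) p | p in lvl u' l] -> p \in lvl u' l.
  move=> hu hu' hp E'; have /imsetP [q hq eq] :
    lift_pair (relabel_pairs w l) p \in [set lift_pair (relabel_pairs w l) p | p in lvl u' l].
    by rewrite -E' imset_f.
  have [p1 p2] := lvl_bound hu hl0 hp; have [q1 q2] := lvl_bound hu' hl0 hq.
  by rewrite (lift_pair_inj hK G1 G2 p1 p2 q1 q2 eq).
by apply/setP => p; apply/idP/idP => hp; [apply: (lift_in w) | apply: (lift_in w')].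
Qed.

Lemma relabel_inj (w w' : out) : w \in Om -> w' \in Om -> relabel w = relabel w' -> w = w'.
Proof.
move=> hw hw' e; have hlvl := lvl_relabel_inj hw hw' e.
apply: outcome_ext => // l hlN.
case: (ltnP l n) => hln; first by rewrite -(cho_relabel_low w hln) e cho_relabel_low.
have hl : n <= l <= N by rewrite hln hlN.
have hp l' : pairs w l' = pairs w' l' by rewrite !pairsE hlvl.
have hc : relabel_cho w l = relabel_cho w' l.
  by rewrite /relabel_cho (relabel_pairs_ext (fun l' _ => hp l')) /resort_index hp.
have := congr1 (fun u : out => cho u l) e; rewrite /= !cho_relabel_high // hc.
by have [_] := relabel_cho_perm hw' hl; apply; apply: Omega_cho.
Qed.

End Relabel.

Definition swap_nat (x y z : nat) : nat := if z == x then y else if z == y then x else z.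

Lemma swap_natK x y : involutive (swap_nat x y).
Proof. by move=> z; rewrite /swap_nat; do !case: eqP => //; move=> *; subst. Qed.

Lemma swap_nat_l x y : swap_nat x y x = y.
Proof. by rewrite /swap_nat eqxx. Qed.

Lemma perm_below_swap K x y : x < K -> y < K -> perm_below K (swap_nat x y).
Proof.
move=> hx hy; split=> [z hz|z z' _ _ e]; first by rewrite /swap_nat; do !case: eqP.
by rewrite -(swap_natK x y z) e swap_natK.
Qed.

Section Conditioning.
Variables (k : nat -> nat) (N n j : nat).
Hypotheses (hj : 0 < j) (hN : j.+2 * 2 ^ n <= 2 ^ N.+1).
Local Notation out := (outcome k N).
Local Notation Om := (Omega k N).
Local Notation X := (@Xblock k N n j).
Local Notation Y := (@Xblock k N n j.+1).
Local Notation Z := (@Gle k N n).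
Local Notation idx t w := (block_index w n t N.+1).

Let blockj : j * 2 ^ n < 2 ^ N.+1.
Proof. by apply: leq_trans hN; rewrite ltn_pmul2r ?expn_gt0. Qed.

Let blockj1 : j.+1 * 2 ^ n < 2 ^ N.+1.
Proof. by apply: leq_trans hN; rewrite ltn_pmul2r ?expn_gt0. Qed.

Let idx_lt t (w : out) : w \in Om -> 0 < t -> t * 2 ^ n < 2 ^ N.+1 -> idx t w < k n.
Proof. by move=> hw ht htN; apply: block_index_lt hw ht (block_fuel ht htN) htN. Qed.

Definition fiber g a c : {set out} :=
  [set w in Om | (Z w == g) && (idx j w == a) && (idx j.+1 w == c)].

(* Blocks [j] and [j + 1] have different parities, so relabelling the level-[n]
   indices by suitable transpositions moves [(a, c)] to any [(a', c')]. *)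
Lemma fiber_card_le g a c a' c' : a < k n -> c < k n -> a' < k n -> c' < k n ->
  #|fiber g a c| <= #|fiber g a' c'|.
Proof.
move=> ha hc ha' hc'.
pose sg := if odd j then swap_nat c c' else swap_nat a a'.
pose rh := if odd j then swap_nat a a' else swap_nat c c'.
have Gs : perm_below (k n) sg by rewrite /sg; case: ifP => _; apply: perm_below_swap.
have Gr : perm_below (k n) rh by rewrite /rh; case: ifP => _; apply: perm_below_swap.
rewrite -(card_in_imset (f := relabel n sg rh)); last first.
  move=> w w'; rewrite !in_set_in => /andP [hw _] /andP [hw' _].
  exact: (relabel_inj Gs Gr hw hw').
apply/subset_leq_card/subsetP => x /imsetP [w]; rewrite in_set_in.
move=> /andP [hw /andP [/andP [/eqP hg /eqP ea] /eqP ec]] ->.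
have hjd := block_fuel hj blockj; have hj1d := block_fuel (ltn0Sn j) blockj1.
rewrite in_set_in relabel_in_Omega // Gle_relabel hg eqxx.
rewrite (block_index_relabel Gs Gr hw hj hjd blockj (leqnn n)).
rewrite (block_index_relabel Gs Gr hw (ltn0Sn j) hj1d blockj1 (leqnn n)).
by rewrite ltnn ea ec /= /sg /rh; case: (odd j); rewrite /= !swap_nat_l !eqxx.
Qed.

Definition fiber_size g := #|fiber g 0 0|.

Lemma card_fiber g a c : a < k n -> c < k n -> #|fiber g a c| = fiber_size g.
Proof.
by move=> ha hc; apply/eqP; rewrite eqn_leq !fiber_card_le //; lia.
Qed.

Lemma card_Gle_index g a : a < k n ->
  #|[set w in Om | (Z w == g) && (idx j w == a)]| = k n * fiber_size g.
Proof.
move=> ha; apply: (card_fibers (f := fun w => idx j.+1 w)) => [w|c hc].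
  by rewrite in_set_in => /andP [hw _]; apply: idx_lt.
by rewrite -(card_fiber g ha hc); apply: eq_card => w; rewrite !in_set_in !andbA.
Qed.

Lemma card_Gle_index_succ g c : c < k n ->
  #|[set w in Om | (Z w == g) && (idx j.+1 w == c)]| = k n * fiber_size g.
Proof.
move=> hc; apply: (card_fibers (f := fun w => idx j w)) => [w|a ha].
  by rewrite in_set_in => /andP [hw _]; apply: idx_lt.
rewrite -(card_fiber g ha hc); apply: eq_card => w; rewrite !in_set_in.
by rewrite -!andbA; congr [&& _, _ & _]; rewrite andbC.
Qed.

Lemma card_Gle g : #|[set w in Om | Z w == g]| = k n * (k n * fiber_size g).
Proof.
apply: (card_fibers (f := fun w => idx j w)) => [w|a ha].
  by rewrite in_set_in => /andP [hw _]; apply: idx_lt.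
by rewrite -(card_Gle_index g ha); apply: eq_card => w; rewrite !in_set_in andbA.
Qed.

Lemma card_Xblock_Gle_class (w : out) : w \in Om ->
  #|[set w' in Om | (X w' == X w) && (Z w' == Z w)]| = k n * fiber_size (Z w).
Proof.
move=> hw; rewrite -(card_Gle_index (Z w) (idx_lt hw hj blockj)).
apply: eq_card => w'; rewrite !in_set_in; case: (boolP (w' \in Om)) => hw' //=.
case: (Z w' =P Z w) => hz; last by rewrite !andbF.
by rewrite (eq_Xblock_index hw hw' hz hj blockj) andbT.
Qed.

Lemma card_Xblock_succ_Gle_class (w : out) : w \in Om ->
  #|[set w' in Om | (Y w', Z w') == (Y w, Z w)]| = k n * fiber_size (Z w).
Proof.
move=> hw; have hc := idx_lt hw (ltn0Sn j) blockj1.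
rewrite -(card_Gle_index_succ (Z w) hc).
apply: eq_card => w'; rewrite !in_set_in xpair_eqE; case: (boolP (w' \in Om)) => hw' //=.
case: (Z w' =P Z w) => hz; last by rewrite !andbF.
by rewrite (eq_Xblock_index hw hw' hz (ltn0Sn j) blockj1) andbT.
Qed.

Lemma card_Xblock_pair_Gle_class (w : out) : w \in Om ->
  #|[set w' in Om | (X w' == X w) && ((Y w', Z w') == (Y w, Z w))]| = fiber_size (Z w).
Proof.
move=> hw; have ha := idx_lt hw hj blockj.
have hc := idx_lt hw (ltn0Sn j) blockj1.
rewrite -(card_fiber (Z w) ha hc); apply: eq_card => w'.
rewrite !in_set_in xpair_eqE; case: (boolP (w' \in Om)) => hw' //=.
case: (Z w' =P Z w) => hz; last by rewrite !andbF.
by rewrite (eq_Xblock_index hw hw' hz hj blockj)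
  (eq_Xblock_index hw hw' hz (ltn0Sn j) blockj1) !andbT.
Qed.

End Conditioning.

Theorem proposition6 (k : nat -> nat)
  (hpos : forall n, 0 < k n)
  (hmono : forall n, k n <= k n.+1)
  (hsq : forall n, k n.+1 <= k n ^ 2)
  (n j N : nat) (hj : 0 < j) (hN : j.+2 * 2 ^ n <= 2 ^ N.+1) :
  condEnt (Omega k N) (@Xblock k N n j) (@Gle k N n) = ln (INR (k n)) /\
  mutInf (Omega k N) (@Xblock k N n j) (@Xblock k N n j.+1) (@Gle k N n) = R0.
Proof.
have [w0 hw0] := Omega_inhabited N hpos hsq.
have hOm : 0 < #|Omega k N| by apply/card_gt0P; exists w0.
have HX : condEnt (Omega k N) (@Xblock k N n j) (@Gle k N n) = ln (INR (k n)).
  apply: condEnt_uniform => // w hw.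
  by rewrite (card_Gle hj hN) (card_Xblock_Gle_class hj hN hw).
have HXY : condEnt (Omega k N) (@Xblock k N n j)
             (fun w => (@Xblock k N n j.+1 w, @Gle k N n w)) = ln (INR (k n)).
  apply: condEnt_uniform => // w hw /=.
  by rewrite (card_Xblock_succ_Gle_class hj hN hw) (card_Xblock_pair_Gle_class hj hN hw).
by split; rewrite // /mutInf HX HXY Rminus_diag.
Qed.
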